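(* Let $\mathcal{X}\subset\mathbb{R}^d$ be nonempty, closed, convex and compact with diameter $D:=\max_{x,y\in\mathcal{X}}\|x-y\|$. Let $\Phi:\mathcal{X}\to\mathbb{R}$ be differentiable with $L$-Lipschitz gradient, and set $G:=\max_{x\in\mathcal{X}}\|\nabla\Phi(x)\|$, $\Phi_{\max}:=\max_{\mathcal{X}}\Phi$, $\Phi_{\min}:=\min_{\mathcal{X}}\Phi$. Let $F:\mathcal{X}\to\mathbb{R}^d$ satisfy $F(x)=-\nabla\Phi(x)+R(x)$ with $\|R(x)\|\le\varepsilon$ for all $x\in\mathcal{X}$. Run $x_{t+1}=\operatorname{Proj}_{\mathcal{X}}(x_t+\eta g_t)$, $t=0,\dots,T-1$, from $x_0\in\mathcal{X}$ with $0<\eta\le 1/L$, where the directions $g_t\in\mathbb{R}^d$ satisfy $\|g_t-\nabla\Phi(x_t)\|\le\delta_t\le\bar\delta$ for all $t$. Let $\widetilde{\mathcal{G}}_\eta(x_t):=\frac1\eta(x_{t+1}-x_t)$, pick $\hat t\in\arg\min_{0\le t\le T-1}\|\widetilde{\mathcal{G}}_\eta(x_t)\|$ and set $\hat x_T:=x_{\hat t}$. Then $$\operatorname{Gap}(\hat x_T)\le \bigl(D+\eta(G+\bar\delta)\bigr)\sqrt{\frac{4(\Phi_{\max}-\Phi_{\min})}{T\eta}+4\bar\delta^2}+D(\varepsilon+\bar\delta).$$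
   Context: For $\bar x\in\mathcal{X}$, the duality gap of $F$ is $\operatorname{Gap}(\bar x):=\max_{x\in\mathcal{X}}\langle F(\bar x),\bar x-x\rangle$ with the Euclidean inner product. $\operatorname{Proj}_{\mathcal{X}}$ is Euclidean projection onto $\mathcal{X}$. *)

From HB Require Import structures.
From mathcomp Require Import all_boot all_order all_algebra.
From mathcomp Require Import all_classical all_reals all_analysis.
Set Implicit Arguments. Unset Strict Implicit. Unset Printing Implicit Defensive.
Import Order.TTheory GRing.Theory Num.Theory.
Import numFieldNormedType.Exports.
Local Open Scope classical_set_scope.
Local Open Scope ring_scope.

Definition dotv {R : realType} {d : nat} (u v : 'rV[R]_d) : R := (u *m v^T) 0 0.
Definition enorm {R : realType} {d : nat} (u : 'rV[R]_d) : R := Num.sqrt (dotv u u).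

Definition convex_vset {R : realType} {d : nat} (X : set 'rV[R]_d) : Prop :=
  forall x y (l : R), X x -> X y -> 0 <= l -> l <= 1 -> X (l *: x + (1 - l) *: y).

Definition is_gradient_at {R : realType} {d : nat} (Phi : 'rV[R]_d -> R)
  (gx : 'rV[R]_d) (x : 'rV[R]_d) : Prop :=
  differentiable Phi x /\ forall h : 'rV[R]_d, 'd Phi x h = dotv gx h.

Definition is_proj {R : realType} {d : nat} (X : set 'rV[R]_d) (z p : 'rV[R]_d) : Prop :=
  X p /\ forall y, X y -> enorm (z - p) <= enorm (z - y).

Definition Gap {R : realType} {d : nat} (X : set 'rV[R]_d) (F : 'rV[R]_d -> 'rV[R]_d)
  (xb : 'rV[R]_d) : R :=
  sup [set dotv (F xb) (xb - x) | x in X].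

(* Each projected step is an approximate ascent step: the projection inequality
   tested at x_t gives ||x_{t+1} - x_t||^2 <= eta <g_t, x_{t+1} - x_t>, and the
   quadratic lower bound of an L-smooth function, with eta <= 1/L and AM-GM on
   the gradient error, turns it into
   Phi(x_{t+1}) - Phi(x_t) >= eta ||G_t||^2 / 4 - eta dbar^2.
   Telescoping over T steps bounds the smallest gradient mapping ||G_that|| by
   the square root of the statement.  Tested at an arbitrary z of X instead,
   the projection inequality at x_that bounds <grad Phi(x_that), z - x_that> by
   (D + eta (G + dbar)) ||G_that|| + D dbar, and the perturbation R adds at
   most D eps. *)
From HB Require Import structures.
From mathcomp Require Import all_boot all_order all_algebra.
From mathcomp Require Import all_classical all_reals all_analysis.
From mathcomp Require Import ring lra.
Import Order.TTheory GRing.Theory Num.Theory.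
Import numFieldNormedType.Exports.
Local Open Scope classical_set_scope.
Local Open Scope ring_scope.

Section InnerProduct.
Context {R : realType} {d : nat}.
Implicit Types u v w : 'rV[R]_d.

Lemma dotvE u v : dotv u v = \sum_i u 0 i * v 0 i.
Proof. by rewrite /dotv !mxE; apply: eq_bigr => i _; rewrite mxE. Qed.

Lemma dotvC u v : dotv u v = dotv v u.
Proof. by rewrite !dotvE; apply: eq_bigr => i _; rewrite mulrC. Qed.

Lemma dotvDl u w v : dotv (u + w) v = dotv u v + dotv w v.
Proof. by rewrite !dotvE -big_split; apply: eq_bigr => i _; rewrite mxE mulrDl. Qed.

Lemma dotvBl u w v : dotv (u - w) v = dotv u v - dotv w v.
Proof. by rewrite !dotvE -sumrB; apply: eq_bigr => i _; rewrite !mxE mulrBl. Qed.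

Lemma dotvZl a u v : dotv (a *: u) v = a * dotv u v.
Proof. by rewrite !dotvE mulr_sumr; apply: eq_bigr => i _; rewrite mxE mulrA. Qed.

Lemma dotvNl u v : dotv (- u) v = - dotv u v.
Proof. by rewrite -scaleN1r dotvZl mulN1r. Qed.

Lemma dotvDr u w v : dotv v (u + w) = dotv v u + dotv v w.
Proof. by rewrite dotvC dotvDl !(dotvC v). Qed.

Lemma dotvBr u w v : dotv v (u - w) = dotv v u - dotv v w.
Proof. by rewrite dotvC dotvBl !(dotvC v). Qed.

Lemma dotvZr a u v : dotv v (a *: u) = a * dotv v u.
Proof. by rewrite dotvC dotvZl dotvC. Qed.

Lemma dotvNr u v : dotv v (- u) = - dotv v u.
Proof. by rewrite dotvC dotvNl dotvC. Qed.

Lemma dotvv_ge0 u : 0 <= dotv u u.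
Proof. by rewrite dotvE; apply: sumr_ge0 => i _; rewrite -expr2 sqr_ge0. Qed.

Lemma dotvv_eq0 {v} : dotv v v = 0 -> forall u, dotv u v = 0.
Proof.
rewrite dotvE => /eqP; rewrite psumr_eq0 => [/allP v0 u|i _]; last first.
  by rewrite -expr2 sqr_ge0.
rewrite dotvE big1 // => i _.
have /v0 : i \in index_enum 'I_d by rewrite mem_index_enum.
by rewrite /= mulf_eq0 orbb => /eqP ->; rewrite mulr0.
Qed.

Lemma enorm_ge0 u : 0 <= enorm u.
Proof. exact: sqrtr_ge0. Qed.

Lemma enorm_sqr u : enorm u ^+ 2 = dotv u u.
Proof. by rewrite sqr_sqrtr // dotvv_ge0. Qed.

Lemma enormZ a u : enorm (a *: u) = `|a| * enorm u.
Proof.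
by rewrite /enorm dotvZl dotvZr mulrA sqrtrM ?sqr_ge0 // -expr2 sqrtr_sqr.
Qed.

Lemma enormN u : enorm (- u) = enorm u.
Proof. by rewrite /enorm dotvNl dotvNr opprK. Qed.

Lemma enormB u v : enorm (u - v) = enorm (v - u).
Proof. by rewrite -enormN opprB. Qed.

Lemma cauchy_schwarz u v : dotv u v <= enorm u * enorm v.
Proof.
have [uv_le0|uv_gt0] := lerP (dotv u v) 0.
  by apply: le_trans uv_le0 _; rewrite mulr_ge0 // enorm_ge0.
have [vv0|vv_neq0] := eqVneq (dotv v v) 0.
  by move: uv_gt0; rewrite (dotvv_eq0 vv0 u) ltxx.
have vv_gt0 : 0 < dotv v v by rewrite lt_def vv_neq0 dotvv_ge0.
have sq_le : dotv u v ^+ 2 <= dotv u u * dotv v v.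
  (* expand the square norm of u minus its projection onto v *)
  have := dotvv_ge0 (u - (dotv u v / dotv v v) *: v).
  rewrite !(dotvBl, dotvBr, dotvZl, dotvZr) (dotvC v u).
  move: (dotv u u) (dotv u v) (dotv v v) vv_gt0 => A B C C_gt0 H.
  rewrite -subr_ge0; have -> : A * C - B ^+ 2
      = (A - B / C * B - B / C * (B - B / C * C)) * C by field; rewrite gt_eqF.
  by rewrite mulr_ge0 // ltW.
rewrite /enorm -sqrtrM ?dotvv_ge0 // -(ger0_norm (ltW uv_gt0)) -sqrtr_sqr.
by rewrite ler_sqrt // mulr_ge0 // dotvv_ge0.
Qed.

End InnerProduct.

Lemma is_proj_dotv_le0 {R : realType} {d : nat} {X : set 'rV[R]_d} {y p z : 'rV[R]_d} :
  convex_vset X -> is_proj X y p -> X z -> dotv (y - p) (z - p) <= 0.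
Proof.
move=> convX [Xp p_min] Xz.
set a := dotv (y - p) (z - p); set b := dotv (z - p) (z - p).
have b_ge0 : 0 <= b := dotvv_ge0 _.
have segment_le l : 0 < l -> l <= 1 -> 2 * l * a <= l ^+ 2 * b.
  move=> l_gt0 l_le1.
  have Xq : X (l *: z + (1 - l) *: p) by apply: convX => //; exact: ltW.
  have := p_min _ Xq; rewrite /enorm ler_sqrt ?dotvv_ge0 //.
  have -> : y - (l *: z + (1 - l) *: p) = (y - p) - l *: (z - p).
    by apply/rowP => i; rewrite !mxE; ring.
  rewrite /a /b !(dotvBl, dotvBr, dotvZl, dotvZr) (dotvC p y) (dotvC z y) (dotvC z p).
  lra.
rewrite leNgt; apply/negP => a_gt0.
have ab_gt0 : 0 < a + b by rewrite ltr_wpDr.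
(* the segment inequality fails at l = a / (a + b) *)
have := segment_le (a / (a + b)).
rewrite divr_gt0 // ler_pdivrMr // mul1r lerDl => /(_ isT b_ge0).
have : a / (a + b) * (a + b) = a by field; rewrite gt_eqF.
have : 0 < a / (a + b) by rewrite divr_gt0.
move: (a / (a + b)) => l l_gt0 la; nra.
Qed.

Lemma is_proj_step_dotv_le {R : realType} {d : nat} {X : set 'rV[R]_d}
    {x g x' z : 'rV[R]_d} {eta : R} :
  convex_vset X -> 0 < eta -> is_proj X (x + eta *: g) x' -> X z ->
  eta * dotv g (z - x') <= dotv (x' - x) (z - x').
Proof.
move=> convX eta_gt0 projx' Xz.
have := is_proj_dotv_le0 convX projx' Xz.
have -> : x + eta *: g - x' = eta *: g - (x' - x).
  by apply/rowP => i; rewrite !mxE; ring.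
by rewrite [dotv (_ - (x' - x)) _]dotvBl dotvZl subr_le0.
Qed.

Lemma is_derive_along_line {R : realType} {d : nat} (Phi : 'rV[R]_d -> R) gz
    (x v : 'rV[R]_d) (s : R) :
  is_gradient_at Phi gz (s *: v + x) ->
  is_derive s 1 (fun t : R => Phi (t *: v + x)) (dotv gz v).
Proof.
move=> [dPhi dPhiE].
have quotientE : (fun h : R => h^-1 *: (((fun t : R => Phi (t *: v + x)) \o shift s)
                   (h *: 1) - Phi (s *: v + x)))
   = (fun h : R => h^-1 *: ((Phi \o shift (s *: v + x)) (h *: v) - Phi (s *: v + x))).
  apply: funext => h /=; congr (_ *: (Phi _ - _)).
  by apply/rowP => i; rewrite /shift !mxE [h%:A]mulr1; ring.
apply: DeriveDef; first by rewrite /derivable quotientE; exact: diff_derivable.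
by rewrite /derive quotientE -/(derive Phi (s *: v + x) v) (deriveE _ dPhi) dPhiE.
Qed.

Section SmoothLowerBound.
Context {R : realType} {d : nat} {X : set 'rV[R]_d} {Phi : 'rV[R]_d -> R}
  {gradPhi : 'rV[R]_d -> 'rV[R]_d} {L : R}.
Hypothesis convX : convex_vset X.
Hypothesis gradP : forall x, X x -> is_gradient_at Phi (gradPhi x) x.
Hypothesis gradP_lipschitz :
  forall x y, X x -> X y -> enorm (gradPhi x - gradPhi y) <= L * enorm (x - y).

Lemma convex_vset_segment {x y : 'rV[R]_d} {s : R} :
  X x -> X y -> 0 <= s -> s <= 1 -> X (s *: (y - x) + x).
Proof.
move=> Xx Xy s_ge0 s_le1; have -> : s *: (y - x) + x = s *: y + (1 - s) *: x.
  by apply/rowP => i; rewrite !mxE; ring.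
exact: convX.
Qed.

Lemma gradient_increment_ge {x y : 'rV[R]_d} {s : R} : X x -> X y -> 0 <= s -> s <= 1 ->
  - (L * s * enorm (y - x) ^+ 2) <= dotv (gradPhi (s *: (y - x) + x) - gradPhi x) (y - x).
Proof.
move=> Xx Xy s_ge0 s_le1; set v := y - x; set w := gradPhi _ - gradPhi x.
have Xs := convex_vset_segment Xx Xy s_ge0 s_le1.
have w_le : enorm w <= L * (s * enorm v).
  by have := gradP_lipschitz _ _ Xs Xx; rewrite addrK enormZ ger0_norm.
have := cauchy_schwarz (- w) v; rewrite dotvNl enormN.
have := ler_wpM2r (enorm_ge0 v) w_le; rewrite expr2; lra.
Qed.

(* The lower (ascent) form of the descent lemma: [fun s => Phi (x + s (y - x))
   + L/2 s^2 |y - x|^2 - s <grad Phi x, y - x>] is nondecreasing on [0, 1]. *)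
Lemma smooth_lower_bound {x y : 'rV[R]_d} : X x -> X y ->
  Phi x + dotv (gradPhi x) (y - x) - L / 2 * enorm (y - x) ^+ 2 <= Phi y.
Proof.
move=> Xx Xy; set v := y - x; set a := dotv (gradPhi x) v.
set c := L / 2 * enorm v ^+ 2.
pose k : R -> R := (fun t : R => Phi (t *: v + x)) + (c \*: (@id R ^+ 2) - a \*: @id R).
have k_derive (s : R) : 0 <= s -> s <= 1 ->
    is_derive s 1 k (dotv (gradPhi (s *: v + x)) v + (c * (2 * s) - a)).
  move=> s_ge0 s_le1; apply: is_deriveD.
    exact/is_derive_along_line/gradP/convex_vset_segment.
  apply: is_derive_eq; rewrite ![_%:A]mulr1 -[c *: _]/(c * _) expr1; ring.
have k_derivable (s : R) : s \in `[0, 1] -> derivable k s 1.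
  by rewrite in_itv /= => /andP[s_ge0 s_le1]; case: (k_derive s s_ge0 s_le1).
have : k 0 <= k 1.
  apply: (@ger0_derive1_le_cc R k 0 1).
  - by move=> s; rewrite in_itv /= => /andP[s_gt0 s_lt1];
      apply: k_derivable; rewrite in_itv /= !ltW.
  - move=> s; rewrite in_itv /= => /andP[s_gt0 s_lt1].
    case: (k_derive s (ltW s_gt0) (ltW s_lt1)) => _; rewrite derive1E => ->.
    have := gradient_increment_ge Xx Xy (ltW s_gt0) (ltW s_lt1).
    rewrite dotvBl -/v -/a /c; lra.
  - by apply: derivable_within_continuous => s; exact: k_derivable.
  - by rewrite in_itv /= lexx ler01.
  - by rewrite in_itv /= lexx ler01.
  - exact: ler01.
have -> : k 0 = Phi (0 *: v + x) + (c * 0 ^+ 2 - a * 0) by [].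
have -> : k 1 = Phi (1 *: v + x) + (c * 1 ^+ 2 - a * 1) by [].
rewrite scale0r add0r scale1r /v subrK expr1n expr0n /= !mulr0 !mulr1.
lra.
Qed.

End SmoothLowerBound.

Lemma Gap_le {R : realType} {d : nat} (X : set 'rV[R]_d) (F : 'rV[R]_d -> 'rV[R]_d)
    (xb : 'rV[R]_d) (c : R) :
  (exists x, X x) -> (forall z, X z -> dotv (F xb) (xb - z) <= c) -> Gap X F xb <= c.
Proof.
move=> [x Xx] ub; apply: ge_sup; first by exists (dotv (F xb) (xb - x)), x.
by move=> r [z Xz <-]; exact: ub.
Qed.

Definition grad_map {R : realType} {d : nat} (eta : R) (xs : nat -> 'rV[R]_d) t :=
  eta^-1 *: (xs t.+1 - xs t).

Section ProjectedGradientAscent.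
Context {R : realType} {d : nat} {X : set 'rV[R]_d} {Phi : 'rV[R]_d -> R}
  {gradPhi : 'rV[R]_d -> 'rV[R]_d} {L eta dbar : R} {T : nat}
  {xs g : nat -> 'rV[R]_d} {delta : nat -> R}.
Hypothesis convX : convex_vset X.
Hypothesis gradP : forall x, X x -> is_gradient_at Phi (gradPhi x) x.
Hypothesis gradP_lipschitz :
  forall x y, X x -> X y -> enorm (gradPhi x - gradPhi y) <= L * enorm (x - y).
Hypothesis L_gt0 : 0 < L.
Hypothesis eta_gt0 : 0 < eta.
Hypothesis eta_le : eta <= L^-1.
Hypothesis X_xs0 : X (xs 0%N).
Hypothesis xs_proj : forall t, (t < T)%N -> is_proj X (xs t + eta *: g t) (xs t.+1).
Hypothesis g_err : forall t, (t < T)%N ->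
  enorm (g t - gradPhi (xs t)) <= delta t /\ delta t <= dbar.

Lemma xs_in {t} : (t <= T)%N -> X (xs t).
Proof. by elim: t => [|t IHt] // tT; case: (xs_proj t tT). Qed.

Lemma enorm_step t : enorm (xs t.+1 - xs t) = eta * enorm (grad_map eta xs t).
Proof.
by rewrite enormZ ger0_norm ?invr_ge0 ?ltW // mulrA divff ?mul1r // gt_eqF.
Qed.

Lemma g_err_le {t} : (t < T)%N -> enorm (g t - gradPhi (xs t)) <= dbar.
Proof. by move=> tT; have [] := g_err t tT; exact: le_trans. Qed.

Lemma ascent_step {t} : (t < T)%N ->
  eta * enorm (grad_map eta xs t) ^+ 2 / 4 - eta * dbar ^+ 2 <= Phi (xs t.+1) - Phi (xs t).
Proof.
move=> tT; have Xx := xs_in (ltnW tT); have Xx' := xs_in tT.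
set x := xs t in Xx *; set x' := xs t.+1 in Xx' *; set u := x' - x.
set m := enorm (grad_map eta xs t); have u_norm : enorm u = eta * m := enorm_step t.
have m_ge0 : 0 <= m := enorm_ge0 _.
have eta_m_ge0 : 0 <= eta * m := mulr_ge0 (ltW eta_gt0) m_ge0.
have proj_ge : eta * (eta * m ^+ 2) <= eta * dotv (g t) u.
  have := is_proj_step_dotv_le convX eta_gt0 (xs_proj t tT) Xx.
  rewrite -[x - x']opprB !dotvNr -enorm_sqr u_norm; lra.
have err_le : dotv (g t - gradPhi x) u <= dbar * (eta * m).
  apply: le_trans (cauchy_schwarz _ _) _; rewrite u_norm.
  exact: ler_wpM2r (g_err_le tT).
have smooth := smooth_lower_bound convX gradP gradP_lipschitz Xx Xx'.
rewrite -/u u_norm in smooth.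
have smooth_coef : L * eta * (eta * m ^+ 2) <= eta * m ^+ 2.
  have L_eta : L * eta <= 1 by rewrite -(mulfV (lt0r_neq0 L_gt0)) ler_pM2l.
  by rewrite -[leRHS]mul1r ler_wpM2r // mulr_ge0 ?sqr_ge0 // ltW.
have am_gm : 0 <= eta * (m / 2 - dbar) ^+ 2 by rewrite mulr_ge0 ?sqr_ge0 ?ltW.
move: proj_ge; rewrite ler_pM2l // => proj_ge.
have : dotv (gradPhi x) u = dotv (g t) u - dotv (g t - gradPhi x) u.
  by rewrite dotvBl opprB addrC subrK.
lra.
Qed.

Lemma ascent_sum {M : R} : (forall t, (t < T)%N -> M <= enorm (grad_map eta xs t)) ->
  0 <= M -> forall n, (n <= T)%N ->
  n%:R * (eta * M ^+ 2 / 4 - eta * dbar ^+ 2) <= Phi (xs n) - Phi (xs 0%N).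
Proof.
move=> M_min M_ge0; elim => [|n IHn] nT; first by rewrite mul0r subrr.
have M_sqr : eta * M ^+ 2 <= eta * enorm (grad_map eta xs n) ^+ 2.
  by rewrite ler_pM2l // ler_sqr ?nnegrE ?enorm_ge0 ?M_min.
have := ascent_step nT; have := IHn (ltnW nT).
rewrite -[n.+1%:R]natr1; lra.
Qed.

Lemma min_grad_map_le {M Phimax Phimin : R} : (0 < T)%N ->
  (forall t, (t < T)%N -> M <= enorm (grad_map eta xs t)) -> 0 <= M ->
  (forall x, X x -> Phi x <= Phimax) -> (forall x, X x -> Phimin <= Phi x) ->
  M <= Num.sqrt (4 * (Phimax - Phimin) / (T%:R * eta) + 4 * dbar ^+ 2).
Proof.
move=> T_gt0 M_min M_ge0 Phi_max Phi_min.
have sum_le := ascent_sum M_min M_ge0 T (leqnn T).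
have Phi_xsT := Phi_max _ (xs_in (leqnn T)); have Phi_xs0 := Phi_min _ X_xs0.
have Teta_gt0 : 0 < T%:R * eta by rewrite mulr_gt0 ?ltr0n.
have Phi_range : 0 <= Phimax - Phimin.
  by rewrite subr_ge0; exact: le_trans Phi_xs0 (Phi_max _ X_xs0).
rewrite -(ger0_norm M_ge0) -sqrtr_sqr ler_sqrt; last first.
  apply: addr_ge0; last by rewrite mulr_ge0 ?sqr_ge0.
  by rewrite divr_ge0 ?mulr_ge0 // ltW.
rewrite -lerBlDr ler_pdivlMr //.
have -> : (M ^+ 2 - 4 * dbar ^+ 2) * (T%:R * eta)
    = 4 * (T%:R * (eta * M ^+ 2 / 4 - eta * dbar ^+ 2)) by field.
lra.
Qed.

Lemma grad_step_dotv_le {D G : R} {t : nat} {z : 'rV[R]_d} :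
  (forall x y, X x -> X y -> enorm (x - y) <= D) ->
  (forall x, X x -> enorm (gradPhi x) <= G) ->
  (t < T)%N -> X z ->
  dotv (gradPhi (xs t)) (z - xs t)
    <= (D + eta * (G + dbar)) * enorm (grad_map eta xs t) + D * dbar.
Proof.
move=> diamX grad_bound tT Xz; have Xx := xs_in (ltnW tT); have Xx' := xs_in tT.
set x := xs t in Xx *; set x' := xs t.+1 in Xx' *; set u := x' - x.
set m := enorm (grad_map eta xs t); have u_norm : enorm u = eta * m := enorm_step t.
have m_ge0 : 0 <= m := enorm_ge0 _.
have eta_m_ge0 : 0 <= eta * m := mulr_ge0 (ltW eta_gt0) m_ge0.
have proj_le : eta * dotv (g t) (z - x') <= eta * (m * D).
  apply: le_trans (is_proj_step_dotv_le convX eta_gt0 (xs_proj t tT) Xz) _.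
  apply: le_trans (cauchy_schwarz _ _) _; rewrite u_norm mulrA.
  by apply: ler_wpM2l => //; exact: diamX.
have err_le : dotv (g t - gradPhi x) u <= dbar * (eta * m).
  apply: le_trans (cauchy_schwarz _ _) _; rewrite u_norm.
  exact: ler_wpM2r (g_err_le tT).
have err_le' : dotv (gradPhi x - g t) (z - x) <= dbar * D.
  apply: le_trans (cauchy_schwarz _ _) _.
  apply: ler_pM; rewrite ?enorm_ge0 //; last exact: diamX.
  by rewrite enormB g_err_le.
have grad_le : dotv (gradPhi x) u <= G * (eta * m).
  apply: le_trans (cauchy_schwarz _ _) _; rewrite u_norm.
  exact: ler_wpM2r (grad_bound _ Xx).
have -> : dotv (gradPhi x) (z - x) = dotv (gradPhi x - g t) (z - x)
    + dotv (g t) (z - x') + (dotv (g t - gradPhi x) u + dotv (gradPhi x) u).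
  have -> : z - x = (z - x') + u by rewrite /u addrA subrK.
  rewrite !(dotvDr, dotvBl); ring.
move: proj_le; rewrite ler_pM2l // => proj_le.
lra.
Qed.

End ProjectedGradientAscent.

Theorem theorem6p8 (R : realType) (d : nat) (X : set 'rV[R]_d)
  (Phi : 'rV[R]_d -> R) (gradPhi : 'rV[R]_d -> 'rV[R]_d)
  (F Rr : 'rV[R]_d -> 'rV[R]_d)
  (L D G Phimax Phimin eps eta dbar : R) (T : nat)
  (xs g : nat -> 'rV[R]_d) (delta : nat -> R) :
  (exists x, X x) -> closed X -> convex_vset X -> compact X ->
  (forall x y, X x -> X y -> enorm (x - y) <= D) ->
  (exists x y, X x /\ X y /\ enorm (x - y) = D) ->
  (forall x, X x -> is_gradient_at Phi (gradPhi x) x) ->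
  0 < L ->
  (forall x y, X x -> X y -> enorm (gradPhi x - gradPhi y) <= L * enorm (x - y)) ->
  (forall x, X x -> enorm (gradPhi x) <= G) ->
  (exists x, X x /\ enorm (gradPhi x) = G) ->
  (forall x, X x -> Phi x <= Phimax) -> (exists x, X x /\ Phi x = Phimax) ->
  (forall x, X x -> Phimin <= Phi x) -> (exists x, X x /\ Phi x = Phimin) ->
  (forall x, X x -> F x = - gradPhi x + Rr x) ->
  (forall x, X x -> enorm (Rr x) <= eps) ->
  (0 < T)%N ->
  X (xs 0%N) ->
  0 < eta -> eta <= L^-1 ->
  (forall t, (t < T)%N -> is_proj X (xs t + eta *: g t) (xs t.+1)) ->
  (forall t, (t < T)%N ->
     enorm (g t - gradPhi (xs t)) <= delta t /\ delta t <= dbar) ->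
  forall that : nat, (that < T)%N ->
  (forall t, (t < T)%N ->
     enorm (eta^-1 *: (xs that.+1 - xs that)) <= enorm (eta^-1 *: (xs t.+1 - xs t))) ->
  Gap X F (xs that) <=
    (D + eta * (G + dbar)) *
      Num.sqrt (4 * (Phimax - Phimin) / (T%:R * eta) + 4 * dbar ^+ 2)
    + D * (eps + dbar).
Proof.
move=> [x0 Xx0] _ convX _ diamX _ gradP L_gt0 gradP_lip grad_bound _ Phi_max _
  Phi_min _ FE Rr_bound T_gt0 X_xs0 eta_gt0 eta_le xs_proj g_err that thatT that_min.
set M := enorm (grad_map eta xs that).
have M_le := min_grad_map_le convX gradP gradP_lip L_gt0 eta_gt0 eta_le X_xs0
  xs_proj g_err T_gt0 that_min (enorm_ge0 _) Phi_max Phi_min.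
have D_ge0 : 0 <= D by apply: le_trans (diamX _ _ Xx0 Xx0); exact: enorm_ge0.
have G_ge0 : 0 <= G by apply: le_trans (grad_bound _ Xx0); exact: enorm_ge0.
have dbar_ge0 : 0 <= dbar.
  by apply: le_trans (g_err_le g_err T_gt0); exact: enorm_ge0.
apply: Gap_le => [|z Xz]; first by exists x0.
have Xx := xs_in X_xs0 xs_proj (ltnW thatT).
rewrite FE // dotvDl dotvNl -dotvNr opprB.
have := grad_step_dotv_le convX eta_gt0 X_xs0 xs_proj g_err diamX grad_bound thatT Xz.
have Rr_le : dotv (Rr (xs that)) (xs that - z) <= eps * D.
  apply: le_trans (cauchy_schwarz _ _) _.
  by apply: ler_pM; rewrite ?enorm_ge0 ?Rr_bound ?diamX.
have coef_ge0 : 0 <= D + eta * (G + dbar) by rewrite addr_ge0 // mulr_ge0 ?addr_ge0 // ltW.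
have := ler_wpM2l coef_ge0 M_le; rewrite -/M; lra.
Qed.
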